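(* Let $w\in\mathbb{Q}^{V_+}_{\ge0}$ and $b\in\mathbb{Z}^{V_+}_{\ge0}$ be such that $\Pi(R)\cap[\mathbf 0,b]^N\ne\emptyset$ for every route $R$, and let $\mathcal{Q}^*(R)=\min\{\sum_{\xi\in[N]}\sum_{v\in V_+}p_\xi w_vy^\xi_v: y\in\Pi(R)\cap[\mathbf 0,b]^N\}$. Suppose values $\mathcal{Q}^*(R,v)$ are given such that for every route $R$ there exists an optimal solution $y^*$ of this minimization with $\mathcal{Q}^*(R,v)=\sum_{\xi\in[N]}p_\xi w_v(y^* )^\xi_v$ for every $v\in V_+$. Then for every route $R$ and every subroute $R'\subseteq R$, $$\sum_{v\in V_+(R')}\mathcal{Q}^*(R',v)\le\sum_{v\in V_+(R')}\mathcal{Q}^*(R,v).$$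
   Context: $G=(V,E)$ complete undirected graph with $V=\{0\}\cup V_+$ ($0$ depot, $V_+$ customers); $D=(V,A)$ replaces each edge by two opposite arcs. Capacity $C>0$; scenarios $\xi\in[N]$ with demands $d^\xi\in\mathbb{Q}^{V_+}_{\ge0}$, $d^\xi(v)\le C$, and probabilities $p_\xi\ge0$, $\sum_\xi p_\xi=1$. A route $R=(v_1,\dots,v_\ell)$ is the cycle $0,v_1,\dots,v_\ell,0$ through distinct customers, $V_+(R)=\{v_1,\dots,v_\ell\}$, $v_0=v_{\ell+1}=0$; a subroute is $R'=(v_i,\dots,v_j)$, $1\le i\le j\le\ell$. Vectors $y\in\mathbb{R}^{[N]\times V_+}$ have entries $y^\xi_v$. For a route $R$ and $\xi$, $\mathcal{Y}^\xi(R)$ is the set of $y^\xi\in\mathbb{Z}^{V_+}_{\ge0}$ for which there exist $f\in\mathbb{R}^A_{\ge0}$, $g\in\mathbb{R}^{V_+}_{\ge0}$ with $f_{(v_{i-1},v_i)}+d^\xi(v_i)=f_{(v_i,v_{i+1})}+g_{v_i}$ ($i\in[\ell]$), $f_{(v_{i-1},v_i)}\le C$ ($i\in[\ell+1]$), $g_{v_i}\le Cy^\xi_{v_i}$ ($i\in[\ell]$). $\Pi(R)=\mathcal{Y}^1(R)\times\cdots\times\mathcal{Y}^N(R)$. $[\mathbf 0,b]^N=\{y:0\le y^\xi_v\le b_v\}$. *)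

From HB Require Import structures.
From mathcomp Require Import all_boot all_order all_algebra.
From mathcomp Require Import reals.
Set Implicit Arguments. Unset Strict Implicit. Unset Printing Implicit Defensive.
Import Order.TTheory GRing.Theory Num.Theory.
Local Open Scope ring_scope.

(* Customers V_+ form a finite type V; vertices of G are [option V]
   with [None] the depot 0.  Arcs of D are pairs of vertices. *)

(* A route R = (v_1,...,v_l) is a duplicate-free sequence of customers.
   node s i = v_i, with v_0 = v_{l+1} = depot (None). *)
Definition node (V : Type) (s : seq V) (i : nat) : option V :=
  nth None (None :: map Some s) i.

Definition is_route (V : eqType) (s : seq V) : bool := (s != [::]) && uniq s.

Definition is_subroute (V : eqType) (s' s : seq V) : bool :=
  (s' != [::]) && infix s' s.

Definition inY (R : realType) (V : finType) (C : rat) (dxi : V -> rat)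
    (s : seq V) (y : V -> nat) : Prop :=
  exists (f : option V -> option V -> R) (g : V -> R),
    [/\ forall a a', 0 <= f a a',
        forall v, 0 <= g v,
        forall i v, (0 < i <= size s)%N -> node s i = Some v ->
          f (node s i.-1) (Some v) + ratr (dxi v) = f (Some v) (node s i.+1) + g v,
        forall i, (0 < i <= (size s).+1)%N -> f (node s i.-1) (node s i) <= ratr C &
        forall i v, (0 < i <= size s)%N -> node s i = Some v ->
          g v <= ratr C * (y v)%:R].

Definition inPiBox (R : realType) (V : finType) (N : nat) (C : rat)
    (d : 'I_N -> V -> rat) (b : V -> nat) (s : seq V) (y : 'I_N -> V -> nat) : Prop :=
  (forall xi, inY R C (d xi) s (y xi)) /\ (forall xi v, (y xi v <= b v)%N).

Definition cost (V : finType) (N : nat) (p : 'I_N -> rat) (w : V -> rat)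
    (y : 'I_N -> V -> nat) : rat :=
  \sum_(xi < N) \sum_(v : V) p xi * w v * (y xi v)%:R.

Definition optimal (R : realType) (V : finType) (N : nat) (C : rat)
    (d : 'I_N -> V -> rat) (p : 'I_N -> rat) (w : V -> rat) (b : V -> nat)
    (s : seq V) (y : 'I_N -> V -> nat) : Prop :=
  inPiBox R C d b s y /\
  forall y', inPiBox R C d b s y' -> cost p w y <= cost p w y'.

(* Restricting a feasible recourse vector of R to the customers of a subroute R' gives a
   feasible recourse vector of R': the flow on the arcs entering and leaving R' inside R
   becomes the flow on the depot arcs of R', and the capacity constraints are untouched.
   Its cost is the part of the cost of y*(R) spent on R', which bounds the optimum of R'
   from above; since all cost terms are nonnegative, that optimum in turn dominates the
   part of its own cost spent on R'. *)

From HB Require Import structures.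
From mathcomp Require Import all_boot all_order all_algebra.
From mathcomp Require Import reals zify.
Import Order.TTheory GRing.Theory Num.Theory.
Local Open Scope ring_scope.
Set Implicit Arguments. Unset Strict Implicit.

Section Nodes.

Variable V : eqType.
Implicit Types (a s c : seq V) (u : option V).

Lemma node_size_succ s : node s (size s).+1 = None.
Proof. by rewrite /node /= nth_default ?size_map. Qed.

Lemma node_inner s i : (0 < i <= size s)%N -> exists v, node s i = Some v.
Proof.
case: i => [//|j] /= lt_j_s.
have : nth None (map Some s) j \in map Some s by rewrite mem_nth ?size_map.
by case/mapP => v _; exists v.
Qed.

Lemma node_mem s i v : node s i = Some v -> v \in s.
Proof.
case: i => [//|j]; rewrite /node /= => node_v.
have lt_j_s : (j < size (map Some s))%N.
  by rewrite ltnNge; apply: contraPN node_v => /(nth_default None) ->.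
by have := mem_nth None lt_j_s; rewrite node_v mem_map //; apply: Some_inj.
Qed.

Lemma node_cat a s c i :
  (0 < i <= size s)%N -> node (a ++ s ++ c) (size a + i) = node s i.
Proof.
case: i => [//|j] /= lt_j_s.
rewrite addnS /node /= !map_cat nth_cat size_map ltnNge leq_addr /= addKn.
by rewrite nth_cat size_map lt_j_s.
Qed.

(* A route R' sitting inside R = a ++ R' ++ c is read in R by replacing its depot with
   the neighbour of R' in R: the predecessor for tails of arcs, the successor for heads. *)
Definition subst_depot (x u : option V) : option V := if u is None then x else u.

Lemma node_cat_tail a s c i : (i <= size s)%N ->
  subst_depot (node (a ++ s ++ c) (size a)) (node s i) = node (a ++ s ++ c) (size a + i).
Proof.
case: i => [|j] le_i_s; first by rewrite addn0.
by rewrite node_cat //; have [v ->] := @node_inner s j.+1 le_i_s.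
Qed.

Lemma node_cat_head a s c i : (0 < i <= (size s).+1)%N ->
  subst_depot (node (a ++ s ++ c) (size a + (size s).+1)) (node s i)
  = node (a ++ s ++ c) (size a + i).
Proof.
case: (ltnP (size s) i) => [lt_s_i i_bounds | le_i_s i_pos].
  have -> : i = (size s).+1 by lia.
  by rewrite node_size_succ addnS.
have i_inner : (0 < i <= size s)%N by lia.
by rewrite (node_cat a c i_inner); have [v ->] := node_inner i_inner.
Qed.

End Nodes.

Section Recourse.

Variables (R : realType) (V : finType) (C : rat).

Lemma inY_eq_in (dxi : V -> rat) s (y y' : V -> nat) :
  {in s, y =1 y'} -> inY R C dxi s y -> inY R C dxi s y'.
Proof.
move=> eq_y [f [g [f_ge0 g_ge0 conserve cap g_le]]].
exists f, g; split=> // i v i_inner node_v.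
by rewrite -eq_y ?(node_mem node_v) //; apply: g_le node_v.
Qed.

Lemma inY_infix (dxi : V -> rat) a s c (y : V -> nat) :
  inY R C dxi (a ++ s ++ c) y -> inY R C dxi s y.
Proof.
set t := a ++ s ++ c.
move=> [f [g [f_ge0 g_ge0 conserve cap g_le]]].
pose tail := subst_depot (node t (size a)).
pose head := subst_depot (node t (size a + (size s).+1)).
have pred_shift i : (0 < i)%N -> (size a + i).-1 = (size a + i.-1)%N by lia.
exists (fun u u' => f (tail u) (head u')), g.
split=> // [i v i_s node_v | i i_s | i v i_s node_v].
- have pred_i_s : (i.-1 <= size s)%N by lia.
  have succ_i_s : (0 < i.+1 <= (size s).+1)%N by lia.
  rewrite /tail /head (node_cat_tail a c pred_i_s) (node_cat_head a c succ_i_s).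
  rewrite -pred_shift ?addnS; last by case/andP: i_s.
  by apply: conserve; rewrite ?node_cat // /t !size_cat; lia.
- have pred_i_s : (i.-1 <= size s)%N by lia.
  rewrite /tail /head (node_cat_tail a c pred_i_s) (node_cat_head a c i_s).
  by rewrite -pred_shift; [apply: cap; rewrite /t !size_cat; lia | case/andP: i_s].
- by apply: (g_le (size a + i)%N); rewrite ?node_cat // /t !size_cat; lia.
Qed.

Variables (N : nat) (d : 'I_N -> V -> rat) (b : V -> nat).

Definition restrict (s : seq V) (y : 'I_N -> V -> nat) xi v : nat :=
  if v \in s then y xi v else 0%N.

Lemma inPiBox_infix s t y :
  infix s t -> inPiBox R C d b t y -> inPiBox R C d b s (restrict s y).
Proof.
move=> /infixP[a [c ->]] [y_feas y_le_b]; split=> [xi | xi v].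
  apply: (@inY_eq_in _ s (y xi)) => [v s_v | ]; first by rewrite /restrict s_v.
  exact: inY_infix (y_feas xi).
by rewrite /restrict; case: ifP => // _; apply: y_le_b.
Qed.

End Recourse.

Section Cost.

Variables (V : finType) (N : nat) (p : 'I_N -> rat) (w : V -> rat).
Hypotheses (p_ge0 : forall xi, 0 <= p xi) (w_ge0 : forall v, 0 <= w v).

Definition vertex_cost (y : 'I_N -> V -> nat) v : rat :=
  \sum_(xi < N) p xi * w v * (y xi v)%:R.

Lemma cost_vertex_cost y : cost p w y = \sum_v vertex_cost y v.
Proof. exact: exchange_big. Qed.

Lemma vertex_cost_ge0 y v : 0 <= vertex_cost y v.
Proof. by apply: sumr_ge0 => xi _; rewrite !mulr_ge0. Qed.

Lemma sum_vertex_cost_le_cost s y :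
  uniq s -> \sum_(v <- s) vertex_cost y v <= cost p w y.
Proof.
move=> s_uniq; rewrite cost_vertex_cost big_uniq // [leRHS](bigID (mem s)) /=.
by rewrite lerDl sumr_ge0 // => v _; apply: vertex_cost_ge0.
Qed.

Lemma cost_restrict s y :
  uniq s -> cost p w (restrict s y) = \sum_(v <- s) vertex_cost y v.
Proof.
move=> s_uniq; rewrite cost_vertex_cost (bigID (mem s)) /= big_uniq //.
rewrite [X in _ + X]big1 ?addr0 => [|v /negbTE s'v]; last first.
  by apply: big1 => xi _; rewrite /restrict s'v mulr0.
by apply: eq_bigr => v s_v; apply: eq_bigr => xi _; rewrite /restrict s_v.
Qed.

End Cost.

Theorem corollary2 (R : realType) (V : finType) (N : nat) (C : rat)
    (d : 'I_N -> V -> rat) (p : 'I_N -> rat) (w : V -> rat) (b : V -> nat)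
    (Qv : seq V -> V -> rat) :
  0 < C ->
  (forall xi v, 0 <= d xi v <= C) ->
  (forall xi, 0 <= p xi) ->
  \sum_(xi < N) p xi = 1 ->
  (forall v, 0 <= w v) ->
  (forall s, is_route s -> exists y, inPiBox R C d b s y) ->
  (forall s, is_route s -> exists y, optimal R C d p w b s y /\
      forall v, Qv s v = \sum_(xi < N) p xi * w v * (y xi v)%:R) ->
  forall s s', is_route s -> is_subroute s' s ->
    \sum_(v <- s') Qv s' v <= \sum_(v <- s') Qv s v.
Proof.
move=> _ _ p_ge0 _ w_ge0 _ Q_opt s s' s_route /andP[s'_ne s'_infix].
have s'_uniq : uniq s' by apply: infix_uniq s'_infix _; case/andP: s_route.
have s'_route : is_route s' by rewrite /is_route s'_ne.
have [y [[y_feas _] Qy]] := Q_opt s s_route.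
have [y' [[_ y'_opt] Qy']] := Q_opt s' s'_route.
rewrite (eq_bigr _ (fun v _ => Qy' v)) (eq_bigr _ (fun v _ => Qy v)).
apply: le_trans (sum_vertex_cost_le_cost p_ge0 w_ge0 y' s'_uniq) _.
by rewrite -cost_restrict //; apply/y'_opt/(inPiBox_infix s'_infix y_feas).
Qed.
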